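(* Let $(X,T),(Y,S)$ be topological dynamical systems and $f\in C(X\times Y)$. (a) If $(Y,S)$ has the specification property, then $\delta(f)\le\gamma(f)$. (b) If $(X,T)$ has the specification property, then $\delta(f)\ge\gamma(f)$.
   Context: A topological dynamical system $(X,T)$: $X$ compact metrizable, $T$ a homeomorphism. Write $\mathbb{A}_kf(x,y)=\frac1k\sum_{j=0}^{k-1}f(T^jx,S^jy)$. $\gamma(f)=\sup_{y\in Y}\inf_{x\in X}\limsup_{k\to\infty}\mathbb{A}_kf(x,y)$ and $\delta(f)=\limsup_{k\to\infty}\max_{y\in Y}\min_{x\in X}\mathbb{A}_kf(x,y)$. A specification in $X$ is $\xi=(x_i,[a_i,b_i])_{i=1}^n$ with integers $a_1\le b_1<a_2\le\dots<a_n\le b_n$; $D$-spaced if $a_{i+1}-b_i\ge D$; $x$ is an $\eta$-tracing if $d(T^jx,T^jx_i)<\eta$ for all $i$, $j\in[a_i,b_i]$ ($d$ a compatible metric). $(X,T)$ has the specification property if for each $\eta>0$ there is $D(\eta)\in\mathbb{N}$ such that every $D(\eta)$-spaced specification admits an $\eta$-tracing. *)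

From HB Require Import structures.
From mathcomp Require Import all_boot all_order all_algebra.
From mathcomp Require Import all_classical all_reals all_analysis.
Set Implicit Arguments. Unset Strict Implicit. Unset Printing Implicit Defensive.
Import Order.TTheory GRing.Theory Num.Theory.
Import numFieldNormedType.Exports.
Local Open Scope classical_set_scope.
Local Open Scope ring_scope.

Definition iterz {X : Type} (T Tinv : X -> X) (j : int) (x : X) : X :=
  match j with
  | Posz n => iter n T x
  | Negz n => iter n.+1 Tinv x
  end.

(* (X,T) is a topological dynamical system: X compact metrizable (here: a
   compact metric space), T a homeomorphism with inverse Tinv *)
Definition tds {R : realType} (X : metricType R) (T Tinv : X -> X) : Prop :=
  [/\ compact [set: X], continuous T, continuous Tinv,
      cancel T Tinv & cancel Tinv T].

Definition spaced_spec {X : Type} (D : nat) (n : nat) (xs : nat -> X)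
    (a b : nat -> int) : Prop :=
  [/\ (0 < n)%N,
      (forall i, (i < n)%N -> a i <= b i),
      (forall i, (i.+1 < n)%N -> b i < a i.+1) &
      (forall i, (i.+1 < n)%N -> (D%:Z <= a i.+1 - b i))].

Definition traces {R : realType} {X : metricType R} (T Tinv : X -> X)
    (eta : R) (n : nat) (xs : nat -> X) (a b : nat -> int) (x : X) : Prop :=
  forall i, (i < n)%N -> forall j : int, a i <= j <= b i ->
    mdist (iterz T Tinv j x) (iterz T Tinv j (xs i)) < eta.

Definition specification_property {R : realType} {X : metricType R}
    (T Tinv : X -> X) : Prop :=
  forall eta : R, 0 < eta -> exists D : nat,
    forall n xs a b, spaced_spec D n xs a b ->
      exists x, traces T Tinv eta n xs a b x.

Definition avg {R : realType} {X Y : Type} (T : X -> X) (S : Y -> Y)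
    (f : X * Y -> R) (k : nat) (x : X) (y : Y) : R :=
  k%:R^-1 * \sum_(j < k) f (iter j T x, iter j S y).

Definition gammaf {R : realType} {X Y : Type} (T : X -> X) (S : Y -> Y)
    (f : X * Y -> R) : \bar R :=
  ereal_sup [set ereal_inf [set limn_esup (fun k => (avg T S f k x y)%:E)
                           | x in [set: X]] | y in [set: Y]].

(* delta(f) = limsup_k max_y min_x A_k f(x,y)  (max/min taken as sup/inf,
   which are attained by compactness and continuity) *)
Definition deltaf {R : realType} {X Y : Type} (T : X -> X) (S : Y -> Y)
    (f : X * Y -> R) : \bar R :=
  limn_esup (fun k => ereal_sup [set ereal_inf [set (avg T S f k x y)%:E
                           | x in [set: X]] | y in [set: Y]]).

From HB Require Import structures.
From mathcomp Require Import all_boot all_order all_algebra.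
From mathcomp Require Import all_classical all_reals all_analysis.
From mathcomp Require Import lra zify.
Import Order.TTheory GRing.Theory Num.Theory.
Import numFieldNormedType.Exports.
Local Open Scope classical_set_scope.
Local Open Scope ring_scope.

(* Both inequalities compare long orbit averages with averages over blocks of a fixed
   length k.  In a system with specification, orbit pieces of length k can be glued,
   with gaps of a length D depending only on the precision, into a single orbit (an
   infinite one, by compactness); uniform continuity of f turns this tracing into
   closeness of the averages, and the gaps cost O(D/k).  For (a), a point y' whose
   k-averages are large against every x is repeated periodically, giving a y whose
   long averages are large against every x.  For (b), for a fixed y one chooses on each
   block a point x' whose k-average against the current position of y is small, and
   glues these points into a single x. *)

Section limn_esup_bounds.
Context {R : realType}.
Implicit Types (u : (\bar R)^nat) (l : \bar R).
Local Open Scope ereal_scope.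

Lemma lee_of_fin_gt (x y : \bar R) :
  (forall r : R, y < r%:E -> x <= r%:E) -> x <= y.
Proof.
case: y => [s| |] xy; last 2 first.
- exact: leey.
- case: x xy => [t| |] xy //; last by have := xy 0%R (ltNyr 0%R).
  by have := xy (t - 1)%R (ltNyr _); rewrite lee_fin => ?; exfalso; lra.
apply/lee_addgt0Pr => e e0; apply: xy; rewrite lte_fin; lra.
Qed.

Lemma limn_esup_le_near u l : (\forall n \near \oo, u n <= l) -> limn_esup u <= l.
Proof.
move=> ul; rewrite /limn_esup limf_esupE; apply: ge_ereal_inf.
exists (ereal_sup (u @` [set n | u n <= l])); first by exists [set n | u n <= l].
by apply: ge_ereal_sup => _ [n + <-].
Qed.

Lemma near_le_limn_esup u l : (\forall n \near \oo, l <= u n) -> l <= limn_esup u.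
Proof.
move=> lu; rewrite /limn_esup limf_esupE; apply: le_ereal_inf_tmp => _ [V FV <-].
have [n [Vn lun]] := filter_ex (filterI FV lu).
by apply: le_ereal_sup_tmp; exists (u n); [exists n|].
Qed.

Lemma limn_esup_lt_near u l : limn_esup u < l -> \forall n \near \oo, u n < l.
Proof.
rewrite /limn_esup limf_esupE => /ereal_inf_lt [_ [V FV <-] Vl].
by apply: filterS FV => n Vn; apply: le_lt_trans Vl; apply: ereal_sup_ubound; exists n.
Qed.

Lemma near_invn_le (K e : R) : (0 < e)%R -> \forall n \near \oo, (K / n%:R <= e)%R.
Proof.
move=> e0; near=> n.
have n0 : (0 < n%:R :> R)%R by near: n; apply: nbhs_infty_gtr.
rewrite ler_pdivrMr // (le_trans (ler_norm K)) // -ler_pdivrMl //.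
by near: n; apply: nbhs_infty_ger.
Unshelve. all: by end_near. Qed.

Lemma limn_esup_le_invn u (c K : R) :
  (forall n, (0 < n)%N -> u n <= (c + K / n%:R)%:E) -> limn_esup u <= c%:E.
Proof.
move=> uc; apply/lee_addgt0Pr => e e0; apply: limn_esup_le_near.
near=> n; apply: le_trans (uc n _) _; first by near: n; exists 1%N.
by rewrite lee_fin lerD2l; near: n; exact: near_invn_le.
Unshelve. all: by end_near. Qed.

Lemma limn_esup_ge_invn u (c K : R) :
  (forall n, (0 < n)%N -> (c - K / n%:R)%:E <= u n) -> c%:E <= limn_esup u.
Proof.
move=> cu; apply/lee_subgt0Pr => e e0; apply: near_le_limn_esup.
near=> n; apply: le_trans (cu n _); last by near: n; exists 1%N.
by rewrite lee_fin lerD2l lerN2; near: n; exact: near_invn_le.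
Unshelve. all: by end_near. Qed.

End limn_esup_bounds.

Section cesaro.
Context {R : realType}.
Implicit Types (g : nat -> R) (B r : R).

Lemma sum_le_bound N (g : 'I_N -> R) B : (forall n, `|g n| <= B) ->
  \sum_(n < N) g n <= N%:R * B.
Proof.
move=> gB; apply: (@le_trans _ _ (\sum_(n < N) B)).
  by apply: ler_sum => n _; apply: le_trans (ler_norm _) (gB n).
by rewrite sumr_const card_ord mulr_natl.
Qed.

Lemma ler_sum_close k (a b : 'I_k -> R) e : (forall t, `|a t - b t| < e) ->
  \sum_(t < k) a t <= \sum_(t < k) b t + k%:R * e.
Proof.
move=> ab; have -> : k%:R * e = \sum_(t < k) e by rewrite sumr_const card_ord mulr_natl.
rewrite -big_split /=.
by apply: ler_sum => t _; rewrite -lerBlDl ltW // (le_lt_trans (ler_norm _)).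
Qed.

Lemma sum_periods_le g P r q : (forall m, \sum_(t < P) g (m * P + t)%N <= P%:R * r) ->
  \sum_(n < q * P) g n <= (q * P)%:R * r.
Proof.
move=> gP; elim: q => [|q IHq]; first by rewrite big_ord0 mul0r.
rewrite mulSnr big_split_ord natrD mulrDl.
by apply: lerD => //; apply: gP.
Qed.

Lemma sum_le_periodic g P B r : (0 < P)%N -> (forall n, `|g n| <= B) ->
  (forall m, \sum_(t < P) g (m * P + t)%N <= P%:R * r) ->
  forall N, \sum_(n < N) g n <= N%:R * r + P%:R * (B + `|r|).
Proof.
move=> P0 gB gP N; have B0 : 0 <= B := le_trans (normr_ge0 _) (gB 0%N).
have sP : (N %% P < P)%N by rewrite ltn_mod.
rewrite [in X in X <= _](divn_eq N P) big_split_ord /=.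
rewrite [in X in _ <= X](divn_eq N P) natrD mulrDl -addrA.
apply: lerD; first exact: sum_periods_le.
apply: le_trans (sum_le_bound _ _ _ (fun n => gB _)) _.
have sP' : (N %% P)%:R <= P%:R :> R by rewrite ler_nat ltnW.
have s0 : 0 <= (N %% P)%:R :> R := ler0n _ _.
have h1 : (N %% P)%:R * B <= P%:R * B by rewrite ler_wpM2r.
have h2 : (N %% P)%:R * `|r| <= P%:R * `|r| by rewrite ler_wpM2r.
have h3 : (N %% P)%:R * - `|r| <= (N %% P)%:R * r.
  by rewrite ler_wpM2l // lerNl -normrN ler_norm.
rewrite mulrN in h3; lra.
Qed.

Definition cesaro g (N : nat) : R := N%:R^-1 * \sum_(n < N) g n.

Lemma limn_esup_cesaro_le g P B r : (0 < P)%N -> (forall n, `|g n| <= B) ->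
  (forall m, \sum_(t < P) g (m * P + t)%N <= P%:R * r) ->
  (limn_esup (fun N => (cesaro g N)%:E) <= r%:E)%E.
Proof.
move=> P0 gB gP; apply: (limn_esup_le_invn _ r (P%:R * (B + `|r|))) => N N0.
have N0' : 0 < N%:R :> R by rewrite ltr0n.
rewrite lee_fin /cesaro ler_pdivrMl // mulrDr mulrCA mulfV ?gt_eqF // mulr1.
exact: sum_le_periodic.
Qed.

Lemma limn_esup_cesaro_ge g P B r : (0 < P)%N -> (forall n, `|g n| <= B) ->
  (forall m, P%:R * r <= \sum_(t < P) g (m * P + t)%N) ->
  (r%:E <= limn_esup (fun N => (cesaro g N)%:E))%E.
Proof.
move=> P0 gB gP; apply: (limn_esup_ge_invn _ r (P%:R * (B + `|r|))) => N N0.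
have N0' : 0 < N%:R :> R by rewrite ltr0n.
have NgB n : `|- g n| <= B by rewrite normrN.
have NgP m : \sum_(t < P) - g (m * P + t)%N <= P%:R * - r.
  by rewrite sumrN mulrN lerN2.
have := sum_le_periodic (fun n => - g n) P B (- r) P0 NgB NgP N.
rewrite lee_fin /cesaro ler_pdivlMl // mulrBr mulrCA mulfV ?gt_eqF // mulr1.
by rewrite sumrN normrN mulrN; lra.
Qed.

End cesaro.

Lemma compact_unif_continuous {R : realType} {U V : pseudoMetricType R} (f : U -> V) :
  compact [set: U] -> continuous f -> unif_continuous f.
Proof.
move=> cU cf; apply/unif_continuousP => e e0.
pose P eta p := forall q, ball p eta q -> ball (f p) e (f q).
have : \forall eta \near 0^'+, [set: U] `<=` P eta.
  apply: ((compact_near_coveringP _).1 cU R (0^'+) P _) => p0 _.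
  have /nbhs_ballP [r r0 fr] : \forall p \near p0, ball (f p0) (e / 2) (f p).
    exact: cf p0 _ (nbhsx_ballx _ _ (divr_gt0 e0 (ltr0Sn _ 1))).
  have r2 : 0 < r / 2 by rewrite divr_gt0.
  have r2r : r / 2 <= r by lra.
  exists (ball p0 (r / 2), [set eta | eta < r / 2]) => /=.
    by split; [exact: nbhsx_ballx | exact: nbhs_right_lt].
  case=> p eta /= [p0p etar] q pq; apply: (ball_splitr (z := f p0)).
    by apply: fr; apply: le_ball r2r _ p0p.
  apply: fr; rewrite [r]splitr; apply: ball_triangle p0p (le_ball (ltW etar) pq).
move=> /(filterI (nbhs_right_gt 0)) /filter_ex [eta [eta0 etaP]].
by exists eta => // -[p q] /= /etaP; apply.
Qed.

Lemma compact_continuous_bounded {R : realType} {Z : topologicalType} (f : Z -> R) :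
  compact [set: Z] -> continuous f -> exists B, forall z, `|f z| <= B.
Proof.
move=> cZ cf; have cfZ : compact (f @` [set: Z]).
  by apply: continuous_compact => //; exact: continuous_subspaceT.
have [M [_ MB]] := compact_bounded cfZ.
exists (`|M| + 1) => z; apply: (MB (`|M| + 1)); last by exists z.
by rewrite (le_lt_trans (ler_norm M)) // ltrDl.
Qed.

Lemma compact_nested_closure {Z : topologicalType} (A : nat -> set Z) :
  compact [set: Z] -> (forall n, A n !=set0) ->
  (forall m n, (m <= n)%N -> A n `<=` A m) -> exists z, forall n, closure (A n) z.
Proof.
move=> cZ A0 Adec.
have FA : ProperFilter (filter_from [set: nat] A).
  apply: filter_from_proper => [|n _]; last exact: A0.
  apply: filter_fromT_filter; first by exists 0%N.
  move=> m n; exists (maxn m n) => z Az.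
  by split; apply: Adec Az; rewrite ?leq_maxl ?leq_maxr.
have [z [_ zA]] := cZ _ FA filterT.
by exists z => n B zB; apply: zA zB; exists n.
Qed.

Lemma closure_ball_split {R : numFieldType} {Z : topologicalType}
    {W : pseudoMetricType R} (phi : Z -> W) (c : W) (e : R) (A : set Z) (z : Z) :
  continuous phi -> 0 < e -> (forall w, A w -> ball (phi w) (e / 2) c) ->
  closure A z -> ball (phi z) e c.
Proof.
move=> cphi e0 Ac /(_ _ (cphi z _ (nbhsx_ballx _ _ (divr_gt0 e0 (ltr0Sn _ 1))))).
by case=> w [/Ac wc zw]; exact: ball_split zw wc.
Qed.

Lemma iterD_can (Z : Type) (U Uinv : Z -> Z) : cancel Uinv U ->
  forall a t z, iter (a + t) U (iter a Uinv z) = iter t U z.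
Proof.
move=> UK a t z; rewrite addnC iterD; congr (iter t U _).
by elim: a => [|a IHa] //; rewrite iterSr /= UK.
Qed.

Lemma iter_continuous (Z : topologicalType) (U : Z -> Z) n :
  continuous U -> continuous (iter n U).
Proof.
move=> cU; elim: n => [|n IHn] z /=; first exact: cvg_id.
exact: continuous_comp (IHn z) (cU _).
Qed.

Section periodic_tracing.
Context {R : realType} {Z : metricType R} (U Uinv : Z -> Z).
Hypotheses (UK : cancel Uinv U) (U_spec : specification_property U Uinv).

Lemma finite_periodic_tracing eta : 0 < eta -> exists D : nat,
  forall k (zs : nat -> Z) M, (0 < k)%N ->
  exists z, forall m t, (m <= M)%N -> (t < k)%N ->
    ball (iter (m * (k + D) + t) U z) eta (iter t U (zs m)).
Proof.
move=> eta0; have [D trace] := U_spec eta eta0; exists D => k zs M k0.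
pose P := (k + D)%N.
(* The i-th piece is the orbit of zs i pulled back by U^(iP), so that it is traced on the
   window [iP, iP + k - 1]. *)
have spaced : spaced_spec D M.+1 (fun i => iter (i * P) Uinv (zs i))
    (fun i => (i * P)%:Z) (fun i => (i * P + k.-1)%:Z).
  by split => // i _; rewrite ?lez_nat ?ltz_nat /P; lia.
have [z zP] := trace _ _ _ _ spaced; exists z => m t mM tk.
have := zP m mM (m * P + t)%:Z.
rewrite !lez_nat leq_addr /= iterD_can // ballEmdist.
by apply; rewrite leq_add2l -ltnS prednK.
Qed.

Hypotheses (cZ : compact [set: Z]) (cU : continuous U).

Lemma periodic_tracing eta : 0 < eta -> exists D : nat,
  forall k (zs : nat -> Z), (0 < k)%N -> exists z, forall m t, (t < k)%N ->
    ball (iter (m * (k + D) + t) U z) eta (iter t U (zs m)).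
Proof.
move=> eta0; have eta2 : 0 < eta / 2 by rewrite divr_gt0.
have [D trace] := finite_periodic_tracing (eta / 2) eta2; exists D => k zs k0.
pose A M := [set z | forall m t, (m <= M)%N -> (t < k)%N ->
  ball (iter (m * (k + D) + t) U z) (eta / 2) (iter t U (zs m))].
have [|M N MN z Az m t mM|z zA] := compact_nested_closure A cZ.
- by move=> M; have [z zP] := trace k zs M k0; exists z.
- by apply: Az; apply: leq_trans MN.
exists z => m t tk; apply: closure_ball_split (zA m) => //.
  exact: iter_continuous.
by move=> w /(_ m t (leqnn m) tk).
Qed.

End periodic_tracing.

Section averages.
Context {R : realType} {X Y : metricType R} (T : X -> X) (S : Y -> Y).
Variables (f : X * Y -> R) (B : R).
Hypotheses (f_bounded : forall p, `|f p| <= B) (f_unif : unif_continuous f).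

Local Notation avg_limsup x y := (limn_esup (fun N => (avg T S f N x y)%:E)).
Local Notation sup_inf_avg k :=
  (ereal_sup [set ereal_inf [set (avg T S f k x y)%:E | x in [set: X]] | y in [set: Y]]).

Lemma avg_mulr k x y : (0 < k)%N ->
  k%:R * avg T S f k x y = \sum_(t < k) f (iter t T x, iter t S y).
Proof. by move=> k0; rewrite /avg mulrA mulfV ?mul1r // pnatr_eq0 -lt0n. Qed.

(* y' is followed by y for k steps out of every k + D; the margin D (r + B) / k pays for
   the gaps. *)
Lemma limsup_avg_ge_of_spec (Sinv : Y -> Y) :
  compact [set: Y] -> continuous S -> cancel Sinv S -> specification_property S Sinv ->
  forall e, 0 < e -> exists D : nat, forall k y' r, (0 < k)%N ->
    (forall x, r + e + D%:R * (r + B) / k%:R <= avg T S f k x y') ->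
    exists y, forall x, (r%:E <= avg_limsup x y)%E.
Proof.
move=> cY cS SK Sspec e e0.
have [eta eta0 feta] := (unif_continuousP f).1 f_unif e e0.
have [D trace] := periodic_tracing S Sinv SK Sspec cY cS eta eta0.
exists D => k y' r k0 ry'; have [y yy'] := trace k (fun=> y') k0.
exists y => x.
apply: (limn_esup_cesaro_ge (fun n => f (iter n T x, iter n S y)) (k + D) B) => // [|m].
  by rewrite addn_gt0 k0.
set n := (m * (k + D))%N; rewrite big_split_ord /= natrD mulrDl.
have k0' : 0 < k%:R :> R by rewrite ltr0n.
have gap :
    - (D%:R * B) <= \sum_(t < D) f (iter (n + (k + t)) T x, iter (n + (k + t)) S y).
  by rewrite lerNl -sumrN; apply: sum_le_bound => t; rewrite normrN.
have block : \sum_(t < k) f (iter t T (iter n T x), iter t S y') <=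
    \sum_(t < k) f (iter (n + t) T x, iter (n + t) S y) + k%:R * e.
  apply: ler_sum_close => t; rewrite -iterD addnC.
  apply: (feta ((_, iter t S y'), (_, iter (n + t) S y))).
  by split; [exact: ballxx | exact/ball_sym/yy'/ltn_ord].
have := ry' (iter n T x); rewrite -(ler_pM2l k0') avg_mulr // => shadow.
rewrite mulrDr mulrCA mulfV ?gt_eqF // mulr1 in shadow.
lra.
Qed.

Lemma limsup_avg_le_of_spec (Tinv : X -> X) :
  compact [set: X] -> continuous T -> cancel Tinv T -> specification_property T Tinv ->
  forall r e, 0 < e ->
  (\forall k \near \oo, forall y', exists x', avg T S f k x' y' < r) ->
  forall y, exists x, (avg_limsup x y <= (r + e)%:E)%E.
Proof.
move=> cX cT TK Tspec r e e0 avg_lt y.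
have e2 : 0 < e / 2 by rewrite divr_gt0.
have [eta eta0 feta] := (unif_continuousP f).1 f_unif (e / 2) e2.
have [D trace] := periodic_tracing T Tinv TK Tspec cX cT eta eta0.
near \oo => k.
have k0 : (0 < k)%N by near: k; exists 1%N.
have avg_ltk : forall y', exists x', avg T S f k x' y' < r by near: k.
have [xs xsP] := choice (fun m => avg_ltk (iter (m * (k + D)) S y)).
have [x xxs] := trace k xs k0; exists x.
apply: (limn_esup_cesaro_le (fun n => f (iter n T x, iter n S y)) (k + D) B) => // [|m].
  by rewrite addn_gt0 k0.
set n := (m * (k + D))%N; rewrite big_split_ord /= natrD mulrDl.
have k0' : 0 < k%:R :> R by rewrite ltr0n.
have gap : \sum_(t < D) f (iter (n + (k + t)) T x, iter (n + (k + t)) S y) <= D%:R * B.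
  exact: sum_le_bound.
have block : \sum_(t < k) f (iter (n + t) T x, iter (n + t) S y) <=
    \sum_(t < k) f (iter t T (xs m), iter t S (iter n S y)) + k%:R * (e / 2).
  apply: ler_sum_close => t; rewrite -iterD [(t + n)%N]addnC.
  apply: (feta ((iter (n + t) T x, _), (iter t T (xs m), _))).
  by split; [exact/xxs/ltn_ord | exact: ballxx].
have := xsP m; rewrite -(ltr_pM2l k0') avg_mulr // => xs_avg.
have kD : D%:R * (B - r) <= k%:R * (e / 2).
  by rewrite -ler_pdivrMr // mulrC; near: k; apply: nbhs_infty_ger.
have De : 0 <= D%:R * e by rewrite mulr_ge0 // ltW.
lra.
Unshelve. all: by end_near. Qed.

Lemma deltaf_le_gammaf (Sinv : Y -> Y) :
  compact [set: Y] -> continuous S -> cancel Sinv S -> specification_property S Sinv ->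
  (deltaf T S f <= gammaf T S f)%E.
Proof.
move=> cY cS SK Sspec; apply: lee_of_fin_gt => r gr; apply/lee_addgt0Pr => e e0.
have [D shadow] := limsup_avg_ge_of_spec Sinv cY cS SK Sspec e e0.
apply: (limn_esup_le_invn _ _ (D%:R * (r + B))) => k k0.
apply: ge_ereal_sup => _ [y' _ <-]; rewrite leNgt; apply/negP => lt_inf.
have [x | y ry] := shadow k y' r k0.
  rewrite -lee_fin; apply: le_trans (ltW lt_inf) _.
  by apply: ereal_inf_lbound; exists x.
suff : (r%:E <= gammaf T S f)%E by rewrite leNgt gr.
apply: le_ereal_sup_tmp; exists (ereal_inf [set avg_limsup x y | x in [set: X]]).
  by exists y.
by apply: le_ereal_inf_tmp => _ [x _ <-]; exact: ry.
Qed.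

Lemma gammaf_le_deltaf (Tinv : X -> X) :
  compact [set: X] -> continuous T -> cancel Tinv T -> specification_property T Tinv ->
  (gammaf T S f <= deltaf T S f)%E.
Proof.
move=> cX cT TK Tspec; apply: lee_of_fin_gt => r dr.
apply: ge_ereal_sup => _ [y _ <-]; apply/lee_addgt0Pr => e e0.
have [|x xy] := limsup_avg_le_of_spec Tinv cX cT TK Tspec r e e0 _ y.
  near=> k => y'.
  have kr : (sup_inf_avg k < r%:E)%E by near: k; exact: limn_esup_lt_near.
  have /ereal_inf_lt [_ [x' _ <-]] :
      (ereal_inf [set (avg T S f k x y')%:E | x in [set: X]] < r%:E)%E.
    by apply: le_lt_trans kr; apply: ereal_sup_ubound; exists y'.
  by rewrite lte_fin; exists x'.
by apply: ge_ereal_inf; exists (avg_limsup x y); [exists x|].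
Unshelve. all: by end_near. Qed.

End averages.

Theorem theorem2p13 (R : realType) (X Y : metricType R)
    (T Tinv : X -> X) (S Sinv : Y -> Y) (f : X * Y -> R) :
  tds T Tinv -> tds S Sinv -> continuous f ->
  (specification_property S Sinv -> (deltaf T S f <= gammaf T S f)%E) /\
  (specification_property T Tinv -> (gammaf T S f <= deltaf T S f)%E).
Proof.
move=> [cX cT _ _ TK] [cY cS _ _ SK] cf.
have cXY : compact [set: X * Y] by rewrite -setXTT; exact: compact_setX.
have [B fB] := compact_continuous_bounded f cXY cf.
have f_unif := compact_unif_continuous f cXY cf.
split => spec.
- exact: deltaf_le_gammaf fB f_unif Sinv cY cS SK spec.
- exact: gammaf_le_deltaf fB f_unif Tinv cX cT TK spec.
Qed.
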